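(* In the one-shot wage theft problem described in the context, for any effort level $a\in[0,1)$, the problem restricted to effort level $a$ has an optimal solution whose promised wages are $w_L^*(a)=\max\{0,\;u-aC'(a)+C(a)\}$ and $w_H^*(a)=w_L^*(a)+C'(a)=\max\{C'(a),\;u+(1-a)C'(a)+C(a)\}$. Further, if $a\in(0,1)$, then every optimal solution of the problem restricted to effort level $a$ has promised wages $w_L^*(a)$ and $w_H^*(a)$.
   Context: Fix $P>0$, $y_H>y_L\ge 0$, a real number $u$ (reservation utility) and $\gamma\in(0,1]$ (inspection probability). Let $C:[0,1)\to\mathbb{R}$ be the worker's effort cost: $C(0)=0$, $C$ increasing, strictly convex, twice differentiable, $C(a)\to\infty$ as $a\to1$. Let $\eta:[0,\infty)\to\mathbb{R}$ be the penalty: strictly convex, increasing, twice differentiable, $\eta(0)=0$. The one-shot wage theft problem is: choose $a,w_H,w_L,b_H,b_L$ to maximize the employer profit $a\,(Py_H-w_H+b_H-\gamma\eta(b_H))+(1-a)\,(Py_L-w_L+b_L-\gamma\eta(b_L))$ subject to (incentive compatibility) $a\in\arg\max_{a'\in[0,1)}\{a'w_H+(1-a')w_L-C(a')\}$; (individual rationality) $a w_H+(1-a)w_L-C(a)\ge u$; $w_H,w_L\ge 0$; $0\le b_L\le w_L$, $0\le b_H\le w_H$; $a\in[0,1)$. The problem restricted to effort level $a$ is the same problem with $a$ fixed. The principal's ideal wage theft $\beta\ge0$ is the value with $\gamma\eta'(\beta)=1$ (assumed to exist). *)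

From Stdlib Require Import Reals Lra.
Open Scope R_scope.

(* f' is the derivative of f on the set D at every point x of D, where the
   limit is taken within D \ {x} (so at an endpoint of an interval it is the
   one-sided derivative). *)
Definition deriv_on (D : R -> Prop) (f f' : R -> R) : Prop :=
  forall x, D x ->
    limit1_in (fun y => (f y - f x) / (y - x)) (fun y => D y /\ y <> x) (f' x) x.

Definition Ico01 (x : R) : Prop := 0 <= x < 1.
Definition Ici0 (x : R) : Prop := 0 <= x.

Definition strictly_increasing_on (D : R -> Prop) (f : R -> R) : Prop :=
  forall x y, D x -> D y -> x < y -> f x < f y.

Definition strictly_convex_on (D : R -> Prop) (f : R -> R) : Prop :=
  forall x y t, D x -> D y -> x <> y -> 0 < t < 1 ->
    f (t * x + (1 - t) * y) < t * f x + (1 - t) * f y.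

Definition cost_assumptions (C Cp Cpp : R -> R) : Prop :=
  C 0 = 0 /\
  strictly_increasing_on Ico01 C /\
  strictly_convex_on Ico01 C /\
  deriv_on Ico01 C Cp /\
  deriv_on Ico01 Cp Cpp /\
  (forall M, exists d, 0 < d /\ forall a, 0 <= a < 1 -> 1 - d < a -> M < C a).

Definition penalty_assumptions (eta etap etapp : R -> R) : Prop :=
  eta 0 = 0 /\
  strictly_increasing_on Ici0 eta /\
  strictly_convex_on Ici0 eta /\
  deriv_on Ici0 eta etap /\
  deriv_on Ici0 etap etapp.

Definition profit (P yH yL gamma : R) (eta : R -> R)
  (a wH wL bH bL : R) : R :=
  a * (P * yH - wH + bH - gamma * eta bH)
  + (1 - a) * (P * yL - wL + bL - gamma * eta bL).

Definition IC (C : R -> R) (a wH wL : R) : Prop :=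
  forall a', 0 <= a' < 1 ->
    a' * wH + (1 - a') * wL - C a' <= a * wH + (1 - a) * wL - C a.

Definition IR (C : R -> R) (u a wH wL : R) : Prop :=
  a * wH + (1 - a) * wL - C a >= u.

Definition feasible_at (C : R -> R) (u a wH wL bH bL : R) : Prop :=
  IC C a wH wL /\ IR C u a wH wL /\
  0 <= wH /\ 0 <= wL /\
  0 <= bL <= wL /\ 0 <= bH <= wH.

Definition optimal_at (P yH yL u gamma : R) (C eta : R -> R)
  (a wH wL bH bL : R) : Prop :=
  feasible_at C u a wH wL bH bL /\
  forall wH' wL' bH' bL', feasible_at C u a wH' wL' bH' bL' ->
    profit P yH yL gamma eta a wH' wL' bH' bL'
    <= profit P yH yL gamma eta a wH wL bH bL.

Definition wLstar (C Cp : R -> R) (u a : R) : R :=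
  Rmax 0 (u - a * Cp a + C a).

Definition wHstar (C Cp : R -> R) (u a : R) : R :=
  wLstar C Cp u a + Cp a.

From Pilot Require Import Defs.
From Stdlib Require Import Reals Lra Psatz.
Open Scope R_scope.

(* For a fixed effort a, theft enters the profit only through the gain
   g(b) = b - gamma * eta(b), which is concave with its maximum at beta; so the
   employer steals min(w, beta) from a promised wage w, and the resulting net
   value -w + g(min(w, beta)) of promising w is strictly decreasing in w.  The
   employer therefore wants both wages as low as the constraints allow.  By the
   convexity of C, IC is implied by wH - wL = C'(a), and for interior a it is
   equivalent to it (first-order condition); then IR and wL >= 0 give
   wL >= w*_L(a).  At a = 0 only wL carries weight in the profit, which is why
   uniqueness needs a > 0. *)

Lemma limit1_in_le (q : R -> R) (Dq : R -> Prop) (L x M : R) :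
  limit1_in q Dq L x ->
  (forall d, 0 < d -> exists y, Dq y /\ R_dist y x < d /\ q y <= M) -> L <= M.
Proof.
  intros Hq Hnear. destruct (Rle_lt_dec L M) as [HLM | HML]; [exact HLM |].
  destruct (Hq (L - M)) as (d & Hd & Hclose); [lra |].
  destruct (Hnear d Hd) as (y & Dy & Hyx & HqM).
  specialize (Hclose y (conj Dy Hyx)). simpl in Hclose. unfold R_dist in Hclose.
  apply Rabs_def2 in Hclose. lra.
Qed.

Lemma limit1_in_ge (q : R -> R) (Dq : R -> Prop) (L x M : R) :
  limit1_in q Dq L x ->
  (forall d, 0 < d -> exists y, Dq y /\ R_dist y x < d /\ M <= q y) -> M <= L.
Proof.
  intros Hq Hnear. apply Ropp_le_cancel.
  apply (limit1_in_le _ Dq _ x _ (limit_Ropp _ _ _ _ Hq)).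
  intros d Hd. destruct (Hnear d Hd) as (y & Dy & Hyx & HMq).
  exists y. repeat split; auto; lra.
Qed.

Lemma exists_near_right (x r d : R) :
  0 < r -> 0 < d -> exists y, x < y < x + r /\ R_dist y x < d.
Proof.
  intros Hr Hd. pose proof (Rmin_pos d r Hd Hr). pose proof (Rmin_l d r). pose proof (Rmin_r d r).
  exists (x + Rmin d r / 2). unfold R_dist. rewrite Rabs_pos_eq; lra.
Qed.

Lemma exists_near_left (x r d : R) :
  0 < r -> 0 < d -> exists y, x - r < y < x /\ R_dist y x < d.
Proof.
  intros Hr Hd. pose proof (Rmin_pos d r Hd Hr). pose proof (Rmin_l d r). pose proof (Rmin_r d r).
  exists (x - Rmin d r / 2). unfold R_dist. rewrite Rabs_left; lra.
Qed.

Section OneSidedChords.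

Variables (D : R -> Prop) (f f' : R -> R) (x r M : R).
Hypotheses (Hf : deriv_on D f f') (Dx : D x) (Hr : 0 < r).

Lemma deriv_le_of_right_chords :
  (forall y, x < y < x + r -> D y /\ f y - f x <= M * (y - x)) -> f' x <= M.
Proof.
  intros Hchord. apply (limit1_in_le _ _ _ x _ (Hf x Dx)). intros d Hd.
  destruct (exists_near_right x r d Hr Hd) as (y & Hy & Hyx).
  destruct (Hchord y Hy) as [Dy Hfy]. exists y. repeat split; auto; [lra |].
  assert (Hq : (f y - f x) / (y - x) * (y - x) = f y - f x) by (field; lra). nra.
Qed.

Lemma deriv_ge_of_right_chords :
  (forall y, x < y < x + r -> D y /\ M * (y - x) <= f y - f x) -> M <= f' x.
Proof.
  intros Hchord. apply (limit1_in_ge _ _ _ x _ (Hf x Dx)). intros d Hd.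
  destruct (exists_near_right x r d Hr Hd) as (y & Hy & Hyx).
  destruct (Hchord y Hy) as [Dy Hfy]. exists y. repeat split; auto; [lra |].
  assert (Hq : (f y - f x) / (y - x) * (y - x) = f y - f x) by (field; lra). nra.
Qed.

Lemma deriv_le_of_left_chords :
  (forall y, x - r < y < x -> D y /\ M * (y - x) <= f y - f x) -> f' x <= M.
Proof.
  intros Hchord. apply (limit1_in_le _ _ _ x _ (Hf x Dx)). intros d Hd.
  destruct (exists_near_left x r d Hr Hd) as (y & Hy & Hyx).
  destruct (Hchord y Hy) as [Dy Hfy]. exists y. repeat split; auto; [lra |].
  assert (Hq : (f y - f x) / (y - x) * (y - x) = f y - f x) by (field; lra). nra.
Qed.

Lemma deriv_ge_of_left_chords :
  (forall y, x - r < y < x -> D y /\ f y - f x <= M * (y - x)) -> M <= f' x.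
Proof.
  intros Hchord. apply (limit1_in_ge _ _ _ x _ (Hf x Dx)). intros d Hd.
  destruct (exists_near_left x r d Hr Hd) as (y & Hy & Hyx).
  destruct (Hchord y Hy) as [Dy Hfy]. exists y. repeat split; auto; [lra |].
  assert (Hq : (f y - f x) / (y - x) * (y - x) = f y - f x) by (field; lra). nra.
Qed.

End OneSidedChords.

Definition convex_set (D : R -> Prop) : Prop :=
  forall x y s, D x -> D y -> 0 < s < 1 -> D (s * y + (1 - s) * x).

Lemma convex_set_Ico01 : convex_set Ico01.
Proof. unfold convex_set, Ico01. intros; split; nra. Qed.

Lemma convex_set_Ici0 : convex_set Ici0.
Proof. unfold convex_set, Ici0. intros; nra. Qed.

Section ConvexFunction.

Variables (D : R -> Prop) (f f' : R -> R).
Hypotheses (HD : convex_set D) (Hconvex : strictly_convex_on D f).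

Lemma strictly_convex_three_point (x z y : R) :
  D x -> D y -> x < z < y ->
  D z /\ f z * (y - x) <= f x * (y - z) + f y * (z - x).
Proof.
  intros Dx Dy Hz. set (s := (z - x) / (y - x)).
  assert (Hsz : s * (y - x) = z - x) by (unfold s; field; lra).
  assert (Hs : 0 < s < 1) by (split; nra).
  assert (Hz_eq : z = s * y + (1 - s) * x) by (unfold s; field; lra).
  split; [rewrite Hz_eq; apply HD; auto |].
  pose proof (Hconvex y x s Dy Dx ltac:(lra) Hs) as Hlt. rewrite <- Hz_eq in Hlt.
  nra.
Qed.

Lemma strictly_convex_tangent_le (x y : R) :
  deriv_on D f f' -> D x -> D y -> f x + f' x * (y - x) <= f y.
Proof.
  intros Hf Dx Dy. set (M := (f y - f x) / (y - x)).
  destruct (Rtotal_order x y) as [Hxy | [<- | Hyx]]; [| lra |].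
  - assert (HM : M * (y - x) = f y - f x) by (unfold M; field; lra).
    assert (f' x <= M).
    { apply (deriv_le_of_right_chords D f f' x (y - x)); auto; [lra |].
      intros z Hz. destruct (strictly_convex_three_point x z y Dx Dy ltac:(lra)) as [Dz Hchord].
      split; [exact Dz | nra]. }
    nra.
  - assert (HM : M * (y - x) = f y - f x) by (unfold M; field; lra).
    assert (M <= f' x).
    { apply (deriv_ge_of_left_chords D f f' x (x - y)); auto; [lra |].
      intros z Hz. destruct (strictly_convex_three_point y z x Dy Dx ltac:(lra)) as [Dz Hchord].
      split; [exact Dz | nra]. }
    nra.
Qed.

End ConvexFunction.

Section Cost.

Variables (C Cp Cpp : R -> R).
Hypothesis HC : cost_assumptions C Cp Cpp.

Lemma cost_deriv_nonneg (a : R) : 0 <= a < 1 -> 0 <= Cp a.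
Proof.
  destruct HC as (_ & Hinc & _ & HCp & _). intros Ha.
  apply (deriv_ge_of_right_chords Ico01 C Cp a (1 - a)); auto; [lra |].
  intros y Hy. assert (Dy : Ico01 y) by (unfold Ico01; lra).
  split; [exact Dy |]. pose proof (Hinc a y Ha Dy ltac:(lra)). lra.
Qed.

Lemma IC_of_wage_gap (a wH wL : R) : 0 <= a < 1 -> wH - wL = Cp a -> IC C a wH wL.
Proof.
  destruct HC as (_ & _ & Hconvex & HCp & _). intros Ha Hgap a' Ha'.
  pose proof (strictly_convex_tangent_le Ico01 C Cp convex_set_Ico01 Hconvex a a' HCp Ha Ha').
  replace wH with (wL + Cp a) by lra. lra.
Qed.

Lemma IC_wage_gap (a wH wL : R) : 0 < a < 1 -> IC C a wH wL -> wH - wL = Cp a.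
Proof.
  destruct HC as (_ & _ & _ & HCp & _). intros Ha HIC.
  assert (Da : Ico01 a) by (unfold Ico01; lra).
  assert (Hchord : forall y, 0 <= y < 1 -> Ico01 y /\ (wH - wL) * (y - a) <= C y - C a)
    by (intros y Hy; split; [exact Hy | pose proof (HIC y Hy); lra]).
  apply Rle_antisym.
  - apply (deriv_ge_of_right_chords Ico01 C Cp a (1 - a)); auto; [lra |].
    intros y Hy. apply Hchord. lra.
  - apply (deriv_le_of_left_chords Ico01 C Cp a a); auto; [lra |].
    intros y Hy. apply Hchord. lra.
Qed.

Lemma feasible_wL_ge_wLstar (u a wH wL bH bL : R) :
  0 <= a < 1 -> feasible_at C u a wH wL bH bL -> wLstar C Cp u a <= wL.
Proof.
  intros Ha (HIC & HIR & _ & HwL & _). unfold Defs.IR in HIR. apply Rmax_lub; [exact HwL |].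
  destruct (Rle_lt_or_eq_dec 0 a (proj1 Ha)) as [Hpos | <-]; [| lra].
  pose proof (IC_wage_gap a wH wL ltac:(lra) HIC). replace wH with (wL + Cp a) in HIR by lra.
  lra.
Qed.

End Cost.

Lemma Rmax_plus_r (x y z : R) : Rmax x y + z = Rmax (x + z) (y + z).
Proof. unfold Rmax. destruct (Rle_dec x y), (Rle_dec (x + z) (y + z)); lra. Qed.

Lemma wHstar_eq_Rmax (C Cp : R -> R) (u a : R) :
  wHstar C Cp u a = Rmax (Cp a) (u + (1 - a) * Cp a + C a).
Proof. unfold wHstar, wLstar. rewrite Rmax_plus_r, Rplus_0_l. f_equal. ring. Qed.

Section WageTheft.

Variables (gamma beta : R) (eta etap etapp : R -> R).
Hypotheses (Hgamma : 0 < gamma) (Heta : penalty_assumptions eta etap etapp)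
  (Hbeta_nonneg : 0 <= beta) (Hbeta : gamma * etap beta = 1).

Definition theft_gain (b : R) : R := b - gamma * eta b.

Definition wage_net_value (w : R) : R := - w + theft_gain (Rmin w beta).

Lemma theft_gain_le_ideal (b : R) : 0 <= b -> theft_gain b <= theft_gain beta.
Proof.
  destruct Heta as (_ & _ & Hconvex & Hetap & _). intros Hb. unfold theft_gain.
  pose proof (strictly_convex_tangent_le Ici0 eta etap convex_set_Ici0 Hconvex
                beta b Hetap Hbeta_nonneg Hb).
  nra.
Qed.

Lemma theft_gain_le_below_ideal (b w : R) :
  0 <= b -> b <= w -> w <= beta -> theft_gain b <= theft_gain w.
Proof.
  intros Hb Hbw Hwbeta.
  (* A concave function is nondecreasing to the left of its maximum. *)
  destruct (Req_dec b w) as [<- | Hbw']; [lra |].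
  destruct (Req_dec w beta) as [-> | Hwbeta']; [apply theft_gain_le_ideal; lra |].
  destruct Heta as (_ & _ & Hconvex & _).
  destruct (strictly_convex_three_point Ici0 eta convex_set_Ici0 Hconvex b w beta
              Hb Hbeta_nonneg ltac:(lra)) as [_ Hchord].
  pose proof (theft_gain_le_ideal b Hb) as Hideal. unfold theft_gain in *.
  nra.
Qed.

Lemma theft_payoff_le_net_value (b w : R) :
  0 <= b <= w -> - w + theft_gain b <= wage_net_value w.
Proof.
  intros Hb. unfold wage_net_value.
  destruct (Rle_dec w beta) as [Hw | Hw].
  - rewrite Rmin_left by exact Hw. pose proof (theft_gain_le_below_ideal b w). lra.
  - rewrite Rmin_right by lra. pose proof (theft_gain_le_ideal b). lra.
Qed.

Lemma wage_net_value_decreasing (w1 w2 : R) :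
  0 <= w1 -> w1 < w2 -> wage_net_value w2 < wage_net_value w1.
Proof.
  destruct Heta as (_ & Hinc & _). intros Hw1 Hw12. unfold wage_net_value, theft_gain.
  destruct (Rle_dec w2 beta) as [Hw2 | Hw2].
  - rewrite !Rmin_left by lra.
    pose proof (Hinc w1 w2 Hw1 ltac:(unfold Ici0; lra) Hw12). nra.
  - rewrite (Rmin_right w2) by lra. destruct (Rle_dec w1 beta) as [Hw1' | Hw1'].
    + rewrite Rmin_left by exact Hw1'.
      destruct (Req_dec w1 beta) as [-> | Hne]; [lra |].
      pose proof (Hinc w1 beta Hw1 Hbeta_nonneg ltac:(lra)). nra.
    + rewrite Rmin_right by lra. lra.
Qed.

Lemma wage_net_value_nonincreasing (w1 w2 : R) :
  0 <= w1 -> w1 <= w2 -> wage_net_value w2 <= wage_net_value w1.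
Proof.
  intros Hw1 Hw12. destruct (Req_dec w1 w2) as [<- | Hne]; [lra |].
  left. apply wage_net_value_decreasing; lra.
Qed.

Variables (P yH yL u : R) (C Cp Cpp : R -> R).
Hypothesis HC : cost_assumptions C Cp Cpp.

Definition best_theft_profit (a wH wL : R) : R :=
  a * (P * yH + wage_net_value wH) + (1 - a) * (P * yL + wage_net_value wL).

Lemma profit_le_best_theft_profit (a wH wL bH bL : R) :
  0 <= a <= 1 -> 0 <= bH <= wH -> 0 <= bL <= wL ->
  profit P yH yL gamma eta a wH wL bH bL <= best_theft_profit a wH wL.
Proof.
  intros Ha HbH HbL.
  pose proof (theft_payoff_le_net_value bH wH HbH).
  pose proof (theft_payoff_le_net_value bL wL HbL).
  unfold profit, best_theft_profit, theft_gain in *. nra.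
Qed.

Lemma profit_at_ideal_theft (a wH wL : R) :
  profit P yH yL gamma eta a wH wL (Rmin wH beta) (Rmin wL beta) = best_theft_profit a wH wL.
Proof. unfold profit, best_theft_profit, wage_net_value, theft_gain. ring. Qed.

Lemma feasible_wstar (a : R) : 0 <= a < 1 ->
  feasible_at C u a (wHstar C Cp u a) (wLstar C Cp u a)
    (Rmin (wHstar C Cp u a) beta) (Rmin (wLstar C Cp u a) beta).
Proof.
  intros Ha. pose proof (cost_deriv_nonneg C Cp Cpp HC a Ha).
  assert (HwL : 0 <= wLstar C Cp u a) by apply Rmax_l.
  assert (HIR : u - a * Cp a + C a <= wLstar C Cp u a) by apply Rmax_r.
  assert (Hmin : forall w, 0 <= w -> 0 <= Rmin w beta <= w)
    by (intros w Hw; split; [apply Rmin_glb | apply Rmin_l]; lra).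
  unfold feasible_at, Defs.IR, wHstar.
  split; [apply (IC_of_wage_gap C Cp Cpp HC); [exact Ha | ring] |].
  repeat split; try apply Hmin; lra.
Qed.

Lemma best_theft_profit_le_wstar (a wH wL bH bL : R) : 0 <= a < 1 ->
  feasible_at C u a wH wL bH bL ->
  best_theft_profit a wH wL <= best_theft_profit a (wHstar C Cp u a) (wLstar C Cp u a).
Proof.
  intros Ha Hfeas. pose proof (feasible_wL_ge_wLstar C Cp Cpp HC u a wH wL bH bL Ha Hfeas).
  pose proof (cost_deriv_nonneg C Cp Cpp HC a Ha).
  assert (HwL : 0 <= wLstar C Cp u a) by apply Rmax_l.
  pose proof (wage_net_value_nonincreasing (wLstar C Cp u a) wL HwL ltac:(lra)).
  unfold best_theft_profit.
  destruct (Rle_lt_or_eq_dec 0 a (proj1 Ha)) as [Hpos | <-]; [| lra].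
  pose proof (IC_wage_gap C Cp Cpp HC a wH wL ltac:(lra) (proj1 Hfeas)).
  pose proof (wage_net_value_nonincreasing (wHstar C Cp u a) wH
                ltac:(unfold wHstar; lra) ltac:(unfold wHstar; lra)).
  nra.
Qed.

Lemma best_theft_profit_lt_wstar (a wH wL bH bL : R) : 0 < a < 1 ->
  feasible_at C u a wH wL bH bL -> wL <> wLstar C Cp u a ->
  best_theft_profit a wH wL < best_theft_profit a (wHstar C Cp u a) (wLstar C Cp u a).
Proof.
  intros Ha Hfeas HwL_ne.
  pose proof (feasible_wL_ge_wLstar C Cp Cpp HC u a wH wL bH bL ltac:(lra) Hfeas).
  pose proof (IC_wage_gap C Cp Cpp HC a wH wL Ha (proj1 Hfeas)).
  pose proof (cost_deriv_nonneg C Cp Cpp HC a ltac:(lra)).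
  assert (HwL : 0 <= wLstar C Cp u a) by apply Rmax_l.
  pose proof (wage_net_value_decreasing (wLstar C Cp u a) wL HwL ltac:(lra)).
  pose proof (wage_net_value_decreasing (wHstar C Cp u a) wH
                ltac:(unfold wHstar; lra) ltac:(unfold wHstar; lra)).
  unfold best_theft_profit. nra.
Qed.

End WageTheft.


Theorem proposition2
  (P yH yL u gamma : R) (C Cp Cpp eta etap etapp : R -> R)
  (HP : 0 < P) (HyL : 0 <= yL) (Hy : yL < yH)
  (Hgamma : 0 < gamma <= 1)
  (HC : cost_assumptions C Cp Cpp)
  (Heta : penalty_assumptions eta etap etapp)
  (Hbeta : exists beta, 0 <= beta /\ gamma * etap beta = 1) :
  forall a, 0 <= a < 1 ->
    wHstar C Cp u a = Rmax (Cp a) (u + (1 - a) * Cp a + C a) /\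
    (exists bH bL,
        optimal_at P yH yL u gamma C eta a
          (wHstar C Cp u a) (wLstar C Cp u a) bH bL) /\
    (0 < a -> forall wH wL bH bL,
        optimal_at P yH yL u gamma C eta a wH wL bH bL ->
        wL = wLstar C Cp u a /\ wH = wHstar C Cp u a).
Proof.
  intros a Ha. destruct Hbeta as (beta & Hbeta_nonneg & Hbeta_ideal).
  assert (Hgamma_pos : 0 < gamma) by lra.
  set (wH0 := wHstar C Cp u a). set (wL0 := wLstar C Cp u a).
  assert (Hfeas0 : feasible_at C u a wH0 wL0 (Rmin wH0 beta) (Rmin wL0 beta))
    by (eapply feasible_wstar; eauto).
  pose proof (profit_at_ideal_theft gamma beta eta P yH yL a wH0 wL0) as Hprofit0.
  assert (Hbound : forall wH wL bH bL, feasible_at C u a wH wL bH bL ->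
            profit P yH yL gamma eta a wH wL bH bL
            <= best_theft_profit gamma beta eta P yH yL a wH wL)
    by (intros wH wL bH bL (_ & _ & _ & _ & HbL & HbH);
        eapply profit_le_best_theft_profit; eauto; lra).
  split; [apply wHstar_eq_Rmax |]. split.
  - exists (Rmin wH0 beta), (Rmin wL0 beta). split; [exact Hfeas0 |].
    intros wH wL bH bL Hfeas. rewrite Hprofit0.
    eapply Rle_trans; [exact (Hbound _ _ _ _ Hfeas) |].
    eapply best_theft_profit_le_wstar; eauto.
  - intros Ha_pos wH wL bH bL [Hfeas Hopt].
    pose proof (Hopt _ _ _ _ Hfeas0) as Hle. rewrite Hprofit0 in Hle.
    destruct (Req_dec wL wL0) as [HwL | HwL].
    + pose proof (IC_wage_gap C Cp Cpp HC a wH wL ltac:(lra) (proj1 Hfeas)).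
      split; [exact HwL |]. unfold wH0, wHstar. fold wL0. lra.
    + pose proof (Hbound _ _ _ _ Hfeas).
      assert (best_theft_profit gamma beta eta P yH yL a wH wL
              < best_theft_profit gamma beta eta P yH yL a wH0 wL0)
        by (eapply best_theft_profit_lt_wstar; eauto; lra).
      lra.
Qed.
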